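(* Let $X$ be a topological vector space and let $\varphi: X\to\overline{\mathbb{R}}$ be continuous. Then $\varphi$ is linear if and only if $\varphi$ is additive and $\varphi(0)=0$.
   Context: $\overline{\mathbb{R}}=\mathbb{R}\cup\{-\infty,+\infty\}$ with the order topology (a neighborhood base of $+\infty$ is $\{\{y:y>a\}:a\in\mathbb{R}\}$, of $-\infty$ is $\{\{y:y<a\}:a\in\mathbb{R}\}$); continuity of $\varphi$ is ordinary continuity into this space. $\operatorname{epi}\varphi=\{(x,t)\in X\times\mathbb{R}:\varphi(x)\le t\}$, $\operatorname{hypo}\varphi=\{(x,t)\in X\times\mathbb{R}:\varphi(x)\ge t\}$. $\varphi$ is linear if $\operatorname{epi}\varphi$ and $\operatorname{hypo}\varphi$ are convex sets and $\varphi(0)=0$. $\varphi$ is additive if $\operatorname{epi}\varphi+\operatorname{epi}\varphi\subseteq\operatorname{epi}\varphi$ and $\operatorname{hypo}\varphi+\operatorname{hypo}\varphi\subseteq\operatorname{hypo}\varphi$. *)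

From Stdlib Require Export Reals.
Open Scope R_scope.

Record TVS : Type := {
  vcar :> Type;
  vadd : vcar -> vcar -> vcar;
  vzero : vcar;
  vopp : vcar -> vcar;
  vscal : R -> vcar -> vcar;
  vadd_assoc : forall x y z, vadd x (vadd y z) = vadd (vadd x y) z;
  vadd_comm : forall x y, vadd x y = vadd y x;
  vadd_0 : forall x, vadd x vzero = x;
  vadd_opp : forall x, vadd x (vopp x) = vzero;
  vscal_assoc : forall a b x, vscal a (vscal b x) = vscal (a * b) x;
  vscal_1 : forall x, vscal 1 x = x;
  vscal_distr_v : forall a x y, vscal a (vadd x y) = vadd (vscal a x) (vscal a y);
  vscal_distr_r : forall a b x, vscal (a + b) x = vadd (vscal a x) (vscal b x);
  vopen : (vcar -> Prop) -> Prop;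
  vopen_full : vopen (fun _ => True);
  vopen_inter : forall U W, vopen U -> vopen W -> vopen (fun x => U x /\ W x);
  vopen_union : forall F : (vcar -> Prop) -> Prop,
      (forall U, F U -> vopen U) -> vopen (fun x => exists U, F U /\ U x);
  vadd_cont : forall x y U, vopen U -> U (vadd x y) ->
      exists V1 V2, vopen V1 /\ vopen V2 /\ V1 x /\ V2 y /\
        forall u v, V1 u -> V2 v -> U (vadd u v);
  vscal_cont : forall a x U, vopen U -> U (vscal a x) ->
      exists d W, 0 < d /\ vopen W /\ W x /\
        forall b y, Rabs (b - a) < d -> W y -> U (vscal b y)
}.

Inductive Rbar : Type := Fin (r : R) | PInf | NInf.

Definition Rbar_le (x y : Rbar) : Prop :=
  match x, y with
  | NInf, _ => True
  | _, PInf => True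
  | Fin a, Fin b => a <= b
  | _, _ => False
  end.

Definition Rbar_lt (x y : Rbar) : Prop :=
  match x, y with
  | NInf, NInf => False
  | NInf, _ => True
  | Fin a, Fin b => a < b
  | Fin _, PInf => True
  | _, _ => False
  end.

(* Continuity into Rbar with the order topology: the open rays
   (a,+oo] and [-oo,a) (a real) form a subbasis of that topology,
   so continuity is equivalent to their preimages being open. *)
Definition Rbar_continuous {X : TVS} (phi : X -> Rbar) : Prop :=
  forall a : R,
    vopen X (fun x => Rbar_lt (Fin a) (phi x)) /\
    vopen X (fun x => Rbar_lt (phi x) (Fin a)).

Definition epi {X : TVS} (phi : X -> Rbar) (p : X * R) : Prop :=
  Rbar_le (phi (fst p)) (Fin (snd p)).
Definition hypo {X : TVS} (phi : X -> Rbar) (p : X * R) : Prop :=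
  Rbar_le (Fin (snd p)) (phi (fst p)).

Definition convex {X : TVS} (S : X * R -> Prop) : Prop :=
  forall x1 t1 x2 t2 l, S (x1, t1) -> S (x2, t2) -> 0 <= l <= 1 ->
    S (vadd X (vscal X l x1) (vscal X (1 - l) x2), l * t1 + (1 - l) * t2).

Definition add_closed {X : TVS} (S : X * R -> Prop) : Prop :=
  forall x1 t1 x2 t2, S (x1, t1) -> S (x2, t2) -> S (vadd X x1 x2, t1 + t2).

Definition Rbar_linear {X : TVS} (phi : X -> Rbar) : Prop :=
  convex (epi phi) /\ convex (hypo phi) /\ phi (vzero X) = Fin 0.

Definition Rbar_additive {X : TVS} (phi : X -> Rbar) : Prop :=
  add_closed (epi phi) /\ add_closed (hypo phi).

(* Linear => additive: if (x1, t1), (x2, t2) lie in the epigraph but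
   phi(x1 + x2) >= r > t1 + t2, then the midpoint of (x1 + x2, r) and (0, 0)
   in the hypograph and the midpoint of (x1, t1) and (x2, t2) in the
   epigraph sit over the same vector at heights r/2 > (t1 + t2)/2, which is
   impossible.
   Additive => linear: the epigraph is then a cone.  Additivity of the
   epigraph gives closure under scaling by positive integers, additivity of
   the hypograph under scaling by their inverses, hence by positive rationals;
   lower semicontinuity of l |-> phi(l x) extends this to positive reals, and
   phi(0) = 0 to l = 0.  An additive cone is convex.  The hypograph is handled
   by passing to -phi. *)
From Pilot Require Import Defs.
From Stdlib Require Import Reals ZArith Lra Lia Classical FunctionalExtensionality PropExtensionality.
Open Scope R_scope.

Lemma rat_approx_above (l e : R) : 0 <= l -> 0 < e ->
  exists m n : nat, l < INR (S m) / INR (S n) < l + e.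
Proof.
  intros Hl He.
  destruct (archimed_cor1 e He) as [[|n] [Hne Hn]]; [lia|].
  set (N := INR (S n)) in Hne.
  assert (HN : 0 < N) by (apply lt_0_INR; lia).
  destruct (archimed (l * N)) as [Hup1 Hup2].
  assert (Hup : (0 < up (l * N))%Z) by (apply lt_0_IZR; nra).
  assert (Hk : INR (Z.to_nat (up (l * N))) = IZR (up (l * N)))
    by (rewrite INR_IZR_INZ, Z2Nat.id; [reflexivity | lia]).
  destruct (Z.to_nat (up (l * N))) as [|m] eqn:Em; [lia|].
  exists m, n. fold N. rewrite Hk.
  assert (Hq : IZR (up (l * N)) / N * N = IZR (up (l * N))) by (field; lra).
  assert (Hinv : / N * N = 1) by (field; lra).
  split; nra.
Qed.

Lemma Rmult_lt_near (l t a : R) : l * t < a ->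
  exists e, 0 < e /\ forall q, Rabs (q - l) < e -> q * t < a.
Proof.
  intros Hlt. pose proof (Rabs_pos t) as Ht.
  exists ((a - l * t) / (Rabs t + 1)). split.
  - apply Rdiv_lt_0_compat; lra.
  - intros q Hq.
    assert (Hbound : Rabs (q - l) * (Rabs t + 1) < a - l * t).
    { apply Rmult_lt_compat_r with (r := Rabs t + 1) in Hq; [|lra].
      unfold Rdiv in Hq. rewrite Rmult_assoc, Rinv_l, Rmult_1_r in Hq by lra.
      exact Hq. }
    assert (Hdiff : (q - l) * t <= Rabs (q - l) * Rabs t)
      by (rewrite <- Rabs_mult; apply Rle_abs).
    pose proof (Rabs_pos (q - l)). nra.
Qed.

Section VectorSpace.
Variable X : TVS.

Lemma vadd_idem (u : X) : vadd X u u = u -> u = vzero X.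
Proof.
  intros H. rewrite <- (vadd_opp X u). rewrite <- H at 2.
  rewrite <- vadd_assoc, vadd_opp, vadd_0. reflexivity.
Qed.

Lemma vscal_0v (a : R) : vscal X a (vzero X) = vzero X.
Proof. apply vadd_idem. rewrite <- vscal_distr_v, vadd_0. reflexivity. Qed.

Lemma vscal_0r (x : X) : vscal X 0 x = vzero X.
Proof. apply vadd_idem. rewrite <- vscal_distr_r, Rplus_0_r. reflexivity. Qed.

Lemma add_closed_scal_nat (A : X * R -> Prop) : add_closed A ->
  forall x t k, A (x, t) -> A (vscal X (INR (S k)) x, INR (S k) * t).
Proof.
  intros HA x t k Ht. induction k as [|k IHk].
  - rewrite vscal_1, Rmult_1_l. exact Ht.
  - rewrite S_INR, vscal_distr_r, vscal_1, Rmult_plus_distr_r, Rmult_1_l.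
    apply HA; assumption.
Qed.

Definition mirror (S : X * R -> Prop) (p : X * R) : Prop := S (fst p, - snd p).

Lemma add_closed_mirror (S : X * R -> Prop) : add_closed S -> add_closed (mirror S).
Proof.
  intros HS x1 t1 x2 t2 H1 H2. unfold mirror in *; simpl in *.
  rewrite Ropp_plus_distr. apply HS; assumption.
Qed.

Lemma convex_mirror (S : X * R -> Prop) : convex S -> convex (mirror S).
Proof.
  intros HS x1 t1 x2 t2 l H1 H2 Hl. unfold mirror in *; simpl in *.
  replace (- (l * t1 + (1 - l) * t2)) with (l * - t1 + (1 - l) * - t2) by ring.
  apply HS; assumption.
Qed.

End VectorSpace.

Lemma Rbar_not_le_lt (x y : Rbar) : ~ Rbar_le x y -> Rbar_lt y x.
Proof. destruct x, y; simpl; try tauto; intros; lra. Qed.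

Lemma Rbar_lt_le (x y : Rbar) : Rbar_lt x y -> Rbar_le x y.
Proof. destruct x, y; simpl; try tauto; intros; lra. Qed.

Lemma Rbar_le_trans (x y z : Rbar) : Rbar_le x y -> Rbar_le y z -> Rbar_le x z.
Proof. destruct x, y, z; simpl; try tauto; intros; lra. Qed.

Lemma Rbar_lt_le_trans (x y z : Rbar) : Rbar_lt x y -> Rbar_le y z -> Rbar_lt x z.
Proof. destruct x, y, z; simpl; try tauto; intros; lra. Qed.

Lemma Rbar_lt_irrefl (x : Rbar) : ~ Rbar_lt x x.
Proof. destruct x; simpl; try tauto; intros; lra. Qed.

Lemma Rbar_lt_fin_dense (s : R) (y : Rbar) : Rbar_lt (Fin s) y ->
  exists a, s < a /\ Rbar_lt (Fin a) y.
Proof.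
  destruct y as [r| |]; simpl; intros H; [| |contradiction].
  - exists ((s + r) / 2). split; simpl; lra.
  - exists (s + 1). split; [lra | exact I].
Qed.

Definition Rbar_opp (x : Rbar) : Rbar :=
  match x with Fin r => Fin (- r) | PInf => NInf | NInf => PInf end.

Section Epigraph.
Variables (X : TVS) (phi : X -> Rbar).

Lemma epi_not_le (x : X) (t : R) : ~ epi phi (x, t) -> Rbar_lt (Fin t) (phi x).
Proof. intros H. apply Rbar_not_le_lt, H. Qed.

Lemma convex_epi_add_closed :
  convex (epi phi) -> convex (Defs.hypo phi) -> phi (vzero X) = Fin 0 ->
  add_closed (epi phi).
Proof.
  intros HE HH H0 x1 t1 x2 t2 E1 E2.
  destruct (classic (epi phi (vadd X x1 x2, t1 + t2))) as [|N]; [assumption|].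
  exfalso.
  destruct (Rbar_lt_fin_dense _ _ (epi_not_le _ _ N)) as [r [Hr Hphi]].
  assert (Hz : Defs.hypo phi (vzero X, 0)) by (unfold Defs.hypo; simpl; rewrite H0; simpl; lra).
  assert (Hmid_hypo := HH _ _ _ _ (/ 2) (Rbar_lt_le _ _ Hphi) Hz ltac:(lra)).
  assert (Hmid_epi := HE _ _ _ _ (/ 2) E1 E2 ltac:(lra)).
  unfold Defs.hypo, epi in Hmid_hypo, Hmid_epi; cbn [fst snd] in Hmid_hypo, Hmid_epi.
  rewrite vscal_0v, vadd_0, vscal_distr_v in Hmid_hypo.
  replace (1 - / 2) with (/ 2) in Hmid_epi by lra.
  pose proof (Rbar_le_trans _ _ _ Hmid_hypo Hmid_epi) as Hle. simpl in Hle. lra.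
Qed.

Hypotheses (HE : add_closed (epi phi)) (HH : add_closed (Defs.hypo phi)).

(* Scaling down uses the hypograph: a violation at y/n would scale up to y. *)
Lemma epi_scal_inv_nat (y : X) (s : R) (n : nat) : epi phi (y, s) ->
  epi phi (vscal X (/ INR (S n)) y, / INR (S n) * s).
Proof.
  intros Hy. destruct (classic (epi phi (vscal X (/ INR (S n)) y, / INR (S n) * s)))
    as [|N]; [assumption|]. exfalso.
  assert (HN : 0 < INR (S n)) by (apply lt_0_INR; lia).
  destruct (Rbar_lt_fin_dense _ _ (epi_not_le _ _ N)) as [r [Hr Hphi]].
  pose proof (add_closed_scal_nat X _ HH _ _ n (Rbar_lt_le _ _ Hphi)) as Hup.
  unfold Defs.hypo, epi in Hup, Hy; cbn [fst snd] in Hup, Hy.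
  rewrite vscal_assoc, Rinv_r, vscal_1 in Hup by lra.
  pose proof (Rbar_le_trans _ _ _ Hup Hy) as Hle. cbn [Rbar_le] in Hle.
  apply Rmult_lt_compat_l with (r := INR (S n)) in Hr; [|lra].
  rewrite <- Rmult_assoc, Rinv_r, Rmult_1_l in Hr by lra. lra.
Qed.

Lemma epi_scal_rat (x : X) (t : R) (m n : nat) : epi phi (x, t) ->
  epi phi (vscal X (INR (S m) / INR (S n)) x, INR (S m) / INR (S n) * t).
Proof.
  intros Hx.
  pose proof (epi_scal_inv_nat _ _ n (add_closed_scal_nat X _ HE _ _ m Hx)) as H.
  rewrite vscal_assoc, <- Rmult_assoc in H.
  unfold Rdiv. rewrite Rmult_comm. exact H.
Qed.

(* A violation at l x persists on a neighbourhood of l by continuity, and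
   that neighbourhood contains a rational q > l with q t still below it. *)
Lemma epi_scal_pos (x : X) (t l : R) : Rbar_continuous phi -> 0 < l ->
  epi phi (x, t) -> epi phi (vscal X l x, l * t).
Proof.
  intros Hc Hl Hx. destruct (classic (epi phi (vscal X l x, l * t))) as [|N];
    [assumption|]. exfalso.
  destruct (Rbar_lt_fin_dense _ _ (epi_not_le _ _ N)) as [a [Ha Hphi]].
  destruct (vscal_cont X l x _ (proj1 (Hc a)) Hphi) as [d [W [Hd [_ [Wx Hnear]]]]].
  destruct (Rmult_lt_near l t a Ha) as [e [He Hqt]].
  destruct (rat_approx_above l (Rmin d e) ltac:(lra) (Rmin_glb_lt _ _ _ Hd He))
    as [m [n [Hq1 Hq2]]].
  set (q := INR (S m) / INR (S n)) in *.
  assert (Hdist : Rabs (q - l) < Rmin d e) by (rewrite Rabs_right; lra).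
  pose proof (Rmin_l d e). pose proof (Rmin_r d e).
  assert (Hbig : Rbar_lt (Fin a) (phi (vscal X q x))) by (apply Hnear; [lra | exact Wx]).
  assert (Hsmall : Rbar_le (phi (vscal X q x)) (Fin a)).
  { apply Rbar_le_trans with (Fin (q * t)); [apply (epi_scal_rat _ _ m n Hx)|].
    simpl. apply Rlt_le, Hqt. lra. }
  exact (Rbar_lt_irrefl _ (Rbar_lt_le_trans _ _ _ Hbig Hsmall)).
Qed.

Lemma epi_scal_nonneg (x : X) (t l : R) : Rbar_continuous phi ->
  phi (vzero X) = Fin 0 -> 0 <= l -> epi phi (x, t) -> epi phi (vscal X l x, l * t).
Proof.
  intros Hc H0 [Hl|<-] Hx.
  - apply epi_scal_pos; assumption.
  - unfold epi; simpl. rewrite vscal_0r, H0; simpl. lra.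
Qed.

Lemma additive_convex_epi : Rbar_continuous phi -> phi (vzero X) = Fin 0 ->
  convex (epi phi).
Proof.
  intros Hc H0 x1 t1 x2 t2 l E1 E2 Hl.
  apply HE; apply epi_scal_nonneg; auto; lra.
Qed.

End Epigraph.

Section Opposite.
Variables (X : TVS) (phi : X -> Rbar).

Let psi (x : X) : Rbar := Rbar_opp (phi x).

Lemma epi_opp : epi psi = mirror X (Defs.hypo phi).
Proof.
  extensionality p. apply propositional_extensionality. destruct p as [x t].
  unfold epi, Defs.hypo, mirror, psi; simpl. destruct (phi x); simpl; try tauto; lra.
Qed.

Lemma hypo_opp : Defs.hypo psi = mirror X (epi phi).
Proof.
  extensionality p. apply propositional_extensionality. destruct p as [x t].
  unfold epi, Defs.hypo, mirror, psi; simpl. destruct (phi x); simpl; try tauto; lra.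
Qed.

Lemma mirror_epi_opp : mirror X (epi psi) = Defs.hypo phi.
Proof.
  rewrite epi_opp. extensionality p. destruct p as [x t].
  unfold mirror; simpl. rewrite Ropp_involutive. reflexivity.
Qed.

Lemma Rbar_continuous_opp : Rbar_continuous phi -> Rbar_continuous psi.
Proof.
  intros Hc a. destruct (Hc (- a)) as [Hgt Hlt].
  split; [ replace (fun x => Rbar_lt (Fin a) (psi x)) with (fun x => Rbar_lt (phi x) (Fin (- a)))
         | replace (fun x => Rbar_lt (psi x) (Fin a)) with (fun x => Rbar_lt (Fin (- a)) (phi x)) ];
    try assumption;
    extensionality x; apply propositional_extensionality;
    unfold psi; destruct (phi x); simpl; try tauto; lra.
Qed.

Lemma Rbar_opp_vzero : phi (vzero X) = Fin 0 -> psi (vzero X) = Fin 0.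
Proof. intros H0. unfold psi. rewrite H0. simpl. rewrite Ropp_0. reflexivity. Qed.

End Opposite.

Theorem mainTheorem19 (X : TVS) (phi : X -> Rbar) :
  Rbar_continuous phi ->
  (Rbar_linear phi <-> Rbar_additive phi /\ phi (vzero X) = Fin 0).
Proof.
  intros Hc. split.
  - intros [HE [HH H0]]. split; [split | exact H0].
    + apply convex_epi_add_closed; assumption.
    + rewrite <- mirror_epi_opp. apply add_closed_mirror, convex_epi_add_closed.
      * rewrite epi_opp. apply convex_mirror, HH.
      * rewrite hypo_opp. apply convex_mirror, HE.
      * apply Rbar_opp_vzero, H0.
  - intros [[HE HH] H0]. split; [| split; [| exact H0]].
    + apply additive_convex_epi; assumption.
    + rewrite <- mirror_epi_opp. apply convex_mirror, additive_convex_epi.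
      * rewrite epi_opp. apply add_closed_mirror, HH.
      * rewrite hypo_opp. apply add_closed_mirror, HE.
      * apply Rbar_continuous_opp, Hc.
      * apply Rbar_opp_vzero, H0.
Qed.
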